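(* Let $g\in L_2(\mathbb{R}^d)$ and let $m_0(g):=\sup\{k\ge0: g\in H^k(\mathbb{R}^d)\}$ be its smoothness, and suppose $m_0(g)\in(d/2,+\infty)$. If $g\notin H^{m_0(g)}(\mathbb{R}^d)$, then there exists an increasing positive function $Q:\mathbb{R}_+\to\mathbb{R}_+$ satisfying $\lim_{s\to+\infty}\frac{\log Q(s)}{\log s}=0$ such that $$\int_{\mathbb{R}^d}\frac{|\mathcal{F}(g)(\omega)|^2}{Q(\|\omega\|)}(1+\|\omega\|^2)^{m_0(g)}d\omega\le 1,\qquad \int_{\mathbb{R}^d}\frac{|\mathcal{F}(g)(\omega)|^2}{Q(\|\omega\|)}(1+\|\omega\|^2)^{m_0(g)+\delta}d\omega=\infty\ \ \forall\delta>0.$$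
   Context: $H^k(\mathbb{R}^d)$ (for real $k\ge0$, possibly non-integer) is the Sobolev space of $g\in L_2(\mathbb{R}^d)$ with $\|g\|_{H^k(\mathbb{R}^d)}^2=\int_{\mathbb{R}^d}|\mathcal{F}(g)(\omega)|^2(1+\|\omega\|_2^2)^kd\omega<\infty$, where $\mathcal{F}(g)(\omega)=(2\pi)^{-d/2}\int g(x)e^{-ix^T\omega}dx$. *)

From HB Require Import structures.
From mathcomp Require Import all_boot all_order all_algebra.
From mathcomp Require Import all_classical all_reals all_analysis.
Import Order.TTheory GRing.Theory Num.Theory numFieldNormedType.Exports.
Set Implicit Arguments.
Unset Strict Implicit.
Unset Printing Implicit Defensive.
Local Open Scope classical_set_scope.
Local Open Scope ring_scope.

Definition dispR (R : realType) : measure_display := ltac:(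
  let t := type of (measurableTypeR R : measurableType _) in
  match t with Measurable.type ?d => exact d end).

Fixpoint dispn (R : realType) (n : nat) : measure_display :=
  match n with 0 => dispR R | n.+1 => measure_prod_display (dispn R n, dispR R) end.

(** [Rd R n] is R^(n+1) = (...((R * R) * R) ... * R) with the product sigma-algebra *)
Fixpoint Rd (R : realType) (n : nat) : measurableType (dispn R n) :=
  match n return measurableType (dispn R n) with
  | 0 => measurableTypeR R
  | n.+1 => (Rd R n * measurableTypeR R)%type end.

Fixpoint lebn (R : realType) (n : nat) : {measure set (Rd R n) -> \bar R} :=
  match n return {measure set (Rd R n) -> \bar R} with
  | 0 => @lebesgue_measure R
  | n.+1 => ((lebn R n) \x (@lebesgue_measure R))%E end.

Fixpoint dotn (R : realType) (n : nat) : Rd R n -> Rd R n -> R :=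
  match n return Rd R n -> Rd R n -> R with
  | 0 => fun x y => (x : R) * (y : R)
  | n.+1 => fun x y => dotn x.1 y.1 + (x.2 : R) * (y.2 : R) end.

(** R^d for d >= 1 *)
Definition Rpow (R : realType) (d : nat) := Rd R d.-1.
Definition leb (R : realType) (d : nat) : {measure set (Rpow R d) -> \bar R} :=
  lebn R d.-1.
Definition dot (R : realType) (d : nat) (x y : Rpow R d) : R := dotn x y.
Definition sqnorm2 (R : realType) (d : nat) (x : Rpow R d) : R := dot x x.
Definition norm2 (R : realType) (d : nat) (x : Rpow R d) : R := Num.sqrt (sqnorm2 x).

(** * L_2(R^d) for complex valued g = gr + i gi *)
Definition L2 (R : realType) (d : nat) (gr gi : Rpow R d -> R) : Prop :=
  measurable_fun setT gr /\ measurable_fun setT gi /\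
  (\int[leb R d]_x ((gr x ^+ 2 + gi x ^+ 2)%:E) < +oo)%E.

(** * Fourier(-Plancherel) transform on L_2 :
   F(g)(w) = (2 pi)^(-d/2) \int g(x) e^{-i x^T w} dx, understood (for g in L_2)
   as the L_2-limit of the transforms of the truncations g 1_{||x|| <= n}. *)
Definition fourier_trunc_re (R : realType) (d : nat) (gr gi : Rpow R d -> R)
    (n : nat) (w : Rpow R d) : R :=
  (2 * pi) `^ (- (d%:R / 2)) *
  Rintegral (leb R d) [set x | norm2 x <= n%:R]
    (fun x => gr x * cos (dot x w) + gi x * sin (dot x w)).

Definition fourier_trunc_im (R : realType) (d : nat) (gr gi : Rpow R d -> R)
    (n : nat) (w : Rpow R d) : R :=
  (2 * pi) `^ (- (d%:R / 2)) *
  Rintegral (leb R d) [set x | norm2 x <= n%:R]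
    (fun x => gi x * cos (dot x w) - gr x * sin (dot x w)).

Definition is_fourier (R : realType) (d : nat) (gr gi Fr Fi : Rpow R d -> R) : Prop :=
  measurable_fun setT Fr /\ measurable_fun setT Fi /\
  (\int[leb R d]_w (((Fr w - fourier_trunc_re gr gi n w) ^+ 2
                    + (Fi w - fourier_trunc_im gr gi n w) ^+ 2)%:E))%E
     @[n --> \oo] --> 0%E.

Definition inH (R : realType) (d : nat) (gr gi : Rpow R d -> R) (k : R) : Prop :=
  L2 gr gi /\
  exists Fr Fi, is_fourier gr gi Fr Fi /\
    (\int[leb R d]_w (((Fr w ^+ 2 + Fi w ^+ 2) * (1 + sqnorm2 w) `^ k)%:E) < +oo)%E.

Definition smoothness (R : realType) (d : nat) (gr gi : Rpow R d -> R) : \bar R :=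
  ereal_sup [set k%:E | k in [set k : R | 0 <= k /\ inH gr gi k]].

(* Let P := |F g|^2 and phi(w) := 1 + |w|^2, eps_j := 1/(j+1).  As m0 is the
   supremum of the Sobolev exponents of g, the moments I_j := \int P phi^(m0 - eps_j)
   are finite, whereas \int P phi^m0 = +oo since g is not in H^m0.  Pick c_j > 0
   with c_j I_j <= 2^-(j+1) and let 1/Q(|w|) be, up to a factor in [1/2, 1],
   S(phi(w)) := sum_j c_j phi(w)^-eps_j.  Then \int P phi^m0 / Q <= sum_j c_j I_j <= 1;
   the bound 1/Q >= c_j phi^-eps_j / 2 with eps_j <= delta makes
   \int P phi^(m0 + delta) / Q infinite; and Q(s) <= 2 (1 + s^2)^eps_j / c_j for
   every j gives log Q(s) / log s --> 0.  The Fourier transform, an L2 limit, is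
   determined almost everywhere, so none of these integrals depends on the chosen
   representative. *)

From HB Require Import structures.
From mathcomp Require Import all_boot all_order all_algebra.
From mathcomp Require Import all_classical all_reals all_analysis.
Import Order.TTheory GRing.Theory Num.Theory numFieldNormedType.Exports.
From mathcomp Require Import measurable_realfun ring lra.
Local Open Scope classical_set_scope.
Local Open Scope ring_scope.
Set Implicit Arguments.
Unset Strict Implicit.
Unset Printing Implicit Defensive.

Lemma dotn_ge0 (R : realType) n (x : Rd R n) : 0 <= dotn x x.
Proof.
elim: n x => [|n IH] x /=; first exact: sqr_ge0.
by rewrite addr_ge0 ?IH ?sqr_ge0.
Qed.

Lemma measurable_dotn (R : realType) d0 (T : measurableType d0) n
    (f g : T -> Rd R n) :
  measurable_fun setT f -> measurable_fun setT g ->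
  measurable_fun setT (fun t => dotn (f t) (g t)).
Proof.
elim: n f g => [|n IH] f g mf mg /=; first exact: measurable_funM.
apply: measurable_funD; first by apply: IH; exact: measurableT_comp.
by apply: measurable_funM; exact: measurableT_comp.
Qed.

Lemma measurable_sqnorm2 (R : realType) d : measurable_fun setT (@sqnorm2 R d).
Proof. exact: measurable_dotn. Qed.

Lemma measurable_norm2 (R : realType) d : measurable_fun setT (@norm2 R d).
Proof.
have msqrt : measurable_fun setT (@Num.sqrt R).
  by apply: nondecreasing_measurable => //; exact: ler_wsqrtr.
exact: measurableT_comp msqrt (@measurable_sqnorm2 R d).
Qed.

Lemma norm2_sqr (R : realType) d (w : Rpow R d) : norm2 w ^+ 2 = sqnorm2 w.
Proof. by rewrite sqr_sqrtr //; exact: dotn_ge0. Qed.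

(* HB instances need a head constant, and [lebn R n] is a structure computed by
   a fixpoint: the sigma-finite instance is put on this alias. *)
Definition lebn_fun (R : realType) n : set (Rd R n) -> \bar R := lebn R n.
Arguments lebn_fun : clear implicits.
HB.instance Definition _ (R : realType) n :=
  Measure.copy (lebn_fun R n) (lebn R n).

Lemma lebn_sigma_finite (R : realType) n : sigma_finite setT (lebn_fun R n).
Proof.
elim: n => [|n IH]; first exact: (sigma_finiteT (@lebesgue_measure R)).
have /sigma_finiteP[F [TF ndF Foo]] := IH.
have /sigma_finiteP[G [TG ndG Goo]] := sigma_finiteT (@lebesgue_measure R).
exists (fun k => F k `*` G k).
  rewrite -setXTT TF TG predeqE => -[x y]; split.
    move=> [/= [i _ Fix] [k _ Gky]]; exists (maxn i k) => //; split.
    - by move: x Fix; exact/subsetPset/ndF/leq_maxl.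
    - by move: y Gky; exact/subsetPset/ndG/leq_maxr.
  by move=> [k _ []/= ? ?]; split; exists k.
move=> k; have [? ?] := Foo k; have [? ?] := Goo k.
split; first exact: measurableX.
by rewrite /lebn_fun /= product_measure1E // lte_mul_pinfty // ge0_fin_numE.
Qed.

HB.instance Definition _ (R : realType) n :=
  Measure_isSigmaFinite.Build _ _ _ (lebn_fun R n) (lebn_sigma_finite R n).

Lemma measurable_fun_integral_snd (R : realType) d1 d2
    (T1 : measurableType d1) (T2 : measurableType d2)
    (m2 : {sigma_finite_measure set T2 -> \bar R}) (F : T1 * T2 -> \bar R) :
  measurable_fun setT F -> measurable_fun setT (fun x => \int[m2]_y F (x, y))%E.
Proof.
move=> mF.
have mFpos : measurable_fun setT (fubini_F m2 (funepos F)).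
  apply: measurable_fun_fubini_tonelli_F; first exact: measurable_funepos.
  by move=> x; exact: funepos_ge0.
have mFneg : measurable_fun setT (fubini_F m2 (funeneg F)).
  apply: measurable_fun_fubini_tonelli_F; first exact: measurable_funeneg.
  by move=> x; exact: funeneg_ge0.
apply: eq_measurable_fun (emeasurable_funB mFpos mFneg) => x _.
rewrite /fubini_F [RHS]integralE.
by congr (_ + (- _))%E; apply: eq_integral => y _; rewrite ?funeposE ?funenegE.
Qed.

Lemma measurable_Rintegral_param (R : realType) n (B : set (Rd R n))
    (h : Rd R n * Rd R n -> R) :
  measurable B -> measurable_fun setT h ->
  measurable_fun setT (fun w => Rintegral (lebn R n) B (fun x => h (w, x))).
Proof.
move=> mB mh; apply: measurableT_comp (fine_measurable measurableT) _.
have -> : (fun w => \int[lebn R n]_(x in B) (h (w, x))%:E)%E =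
    (fun w => \int[lebn_fun R n]_x (h (w, x) * \1_B x)%:E)%E.
  apply/funext => w; rewrite integral_mkcond; apply: eq_integral => x _.
  by rewrite patchE indicE; case: (x \in B); rewrite ?mulr1 ?mulr0.
apply: (@measurable_fun_integral_snd _ _ _ _ _ _ (fun p => (h p * \1_B p.2)%:E)).
apply/measurable_EFinP; apply: measurable_funM => //.
exact: measurableT_comp (measurable_indic mB) measurable_snd.
Qed.

Section fourier_trunc_measurable.
Variables (R : realType) (d : nat) (gr gi : Rpow R d -> R).
Hypotheses (mgr : measurable_fun setT gr) (mgi : measurable_fun setT gi).

Let measurable_ball (n : nat) : measurable [set x : Rpow R d | norm2 x <= n%:R].
Proof.
have := @measurable_norm2 R d measurableT _ (measurable_itv `]-oo, n%:R]).
by rewrite setTI; congr measurable; apply/seteqP; split => x /=; rewrite in_itv.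
Qed.

Let measurable_trig (f : R -> R) : continuous f ->
  measurable_fun setT (fun p : Rpow R d * Rpow R d => f (dot p.2 p.1)).
Proof.
move=> cf; apply: measurableT_comp (continuous_measurable_fun cf) _.
exact: measurable_dotn.
Qed.

Lemma measurable_fourier_trunc_re n :
  measurable_fun setT (fourier_trunc_re gr gi n).
Proof.
apply: measurable_funM => //.
apply: (measurable_Rintegral_param
  (h := fun p => gr p.2 * cos (dot p.2 p.1) + gi p.2 * sin (dot p.2 p.1))) => //.
apply: measurable_funD; apply: measurable_funM;
  by [exact: measurableT_comp | exact: measurable_trig (@continuous_cos R)
     | exact: measurable_trig (@continuous_sin R)].
Qed.

Lemma measurable_fourier_trunc_im n :
  measurable_fun setT (fourier_trunc_im gr gi n).
Proof.
apply: measurable_funM => //.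
apply: (measurable_Rintegral_param
  (h := fun p => gi p.2 * cos (dot p.2 p.1) - gr p.2 * sin (dot p.2 p.1))) => //.
apply: measurable_funB; apply: measurable_funM;
  by [exact: measurableT_comp | exact: measurable_trig (@continuous_cos R)
     | exact: measurable_trig (@continuous_sin R)].
Qed.

End fourier_trunc_measurable.

Lemma sqr_sub_le (R : realFieldType) (a b t : R) :
  (a - b) ^+ 2 <= 2 * (a - t) ^+ 2 + 2 * (b - t) ^+ 2.
Proof.
rewrite -subr_ge0.
have -> : 2 * (a - t) ^+ 2 + 2 * (b - t) ^+ 2 - (a - b) ^+ 2 =
  (a + b - 2 * t) ^+ 2 by ring.
exact: sqr_ge0.
Qed.

Section L2_limit_unique.
Local Open Scope ereal_scope.
Context d0 (T : measurableType d0) (R : realType).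
Variable mu : {measure set T -> \bar R}.

Definition sqdist2 (f1 f2 g1 g2 : T -> R) (x : T) : \bar R :=
  ((f1 x - g1 x) ^+ 2 + (f2 x - g2 x) ^+ 2)%:E.

Lemma sqdist2_ge0 f1 f2 g1 g2 x : 0 <= sqdist2 f1 f2 g1 g2 x.
Proof. by rewrite lee_fin addr_ge0 ?sqr_ge0. Qed.

Lemma measurable_sqdist2 f1 f2 g1 g2 :
  measurable_fun setT f1 -> measurable_fun setT f2 ->
  measurable_fun setT g1 -> measurable_fun setT g2 ->
  measurable_fun setT (sqdist2 f1 f2 g1 g2).
Proof.
move=> mf1 mf2 mg1 mg2; apply/measurable_EFinP.
by apply: measurable_funD; apply: measurable_funM; apply: measurable_funB.
Qed.

Variables (f1 f2 g1 g2 : T -> R) (u v : nat -> T -> R).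
Hypotheses (mf1 : measurable_fun setT f1) (mf2 : measurable_fun setT f2).
Hypotheses (mg1 : measurable_fun setT g1) (mg2 : measurable_fun setT g2).
Hypotheses (mun : forall n, measurable_fun setT (u n))
  (mvn : forall n, measurable_fun setT (v n)).

Lemma integral_sqdist2_le n :
  \int[mu]_x sqdist2 f1 f2 g1 g2 x <=
  2%:E * \int[mu]_x sqdist2 f1 f2 (u n) (v n) x +
  2%:E * \int[mu]_x sqdist2 g1 g2 (u n) (v n) x.
Proof.
rewrite -!ge0_integralZl_EFin //; last 4 first.
- by move=> x _; exact: sqdist2_ge0.
- exact: measurable_sqdist2.
- by move=> x _; exact: sqdist2_ge0.
- exact: measurable_sqdist2.
rewrite -ge0_integralD //; last 4 first.
- by move=> x _; rewrite mule_ge0 ?sqdist2_ge0.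
- exact/emeasurable_funM/measurable_sqdist2.
- by move=> x _; rewrite mule_ge0 ?sqdist2_ge0.
- exact/emeasurable_funM/measurable_sqdist2.
apply: ge0_le_integral => //.
- by move=> x _; exact: sqdist2_ge0.
- exact: measurable_sqdist2.
- by apply: emeasurable_funD; exact/emeasurable_funM/measurable_sqdist2.
move=> x _; rewrite /sqdist2 -!EFinM -EFinD lee_fin.
have := sqr_sub_le (f1 x) (g1 x) (u n x).
have := sqr_sub_le (f2 x) (g2 x) (v n x).
lra.
Qed.

Lemma ae_eq_L2_limit :
  \int[mu]_x sqdist2 f1 f2 (u n) (v n) x @[n --> \oo] --> 0 ->
  \int[mu]_x sqdist2 g1 g2 (u n) (v n) x @[n --> \oo] --> 0 ->
  {ae mu, forall x, f1 x = g1 x /\ f2 x = g2 x}.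
Proof.
move=> cvf cvg.
have mD := measurable_sqdist2 mf1 mf2 mg1 mg2.
have cvfg : 2%:E * \int[mu]_x sqdist2 f1 f2 (u n) (v n) x +
    2%:E * \int[mu]_x sqdist2 g1 g2 (u n) (v n) x @[n --> \oo] --> 0.
  by rewrite -[0](adde0 0) -{1 2}[0](mule0 2%:E); apply: cvgeD => //;
    apply: cvgeZl.
have int_le0 : \int[mu]_x sqdist2 f1 f2 g1 g2 x <= 0.
  rewrite -(cvg_lim _ cvfg) //; apply: lime_ge; first exact: cvgP cvfg.
  by apply: nearW; exact: integral_sqdist2_le.
have int_abs0 : \int[mu]_x `|sqdist2 f1 f2 g1 g2 x| = 0.
  apply/eqP; rewrite eq_le integral_ge0 ?andbT //.
  by rewrite (eq_integral (sqdist2 f1 f2 g1 g2)) // => x _;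
    rewrite gee0_abs ?sqdist2_ge0.
apply: filterS ((ae_eq_integral_abs _ measurableT mD).1 int_abs0).
move=> x /(_ I) /eqP; rewrite /sqdist2 eqe paddr_eq0 ?sqr_ge0 //.
by rewrite !sqrf_eq0 !subr_eq0 => /andP[/eqP -> /eqP ->].
Qed.

End L2_limit_unique.

Lemma measurable_sqr_add d0 (T : measurableType d0) (R : realType) (f g : T -> R) :
  measurable_fun setT f -> measurable_fun setT g ->
  measurable_fun setT (fun x => f x ^+ 2 + g x ^+ 2).
Proof. by move=> mf mg; apply: measurable_funD; exact: measurable_funM. Qed.

Lemma is_fourier_ae_eq (R : realType) d (gr gi Fr Fi Fr' Fi' : Rpow R d -> R) :
  L2 gr gi -> is_fourier gr gi Fr Fi -> is_fourier gr gi Fr' Fi' ->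
  {ae leb R d, forall w, Fr w = Fr' w /\ Fi w = Fi' w}.
Proof.
move=> [mgr [mgi _]] [mFr [mFi cF]] [mFr' [mFi' cF']].
apply: (ae_eq_L2_limit (u := fourier_trunc_re gr gi)
  (v := fourier_trunc_im gr gi)) => //.
- exact: measurable_fourier_trunc_re.
- exact: measurable_fourier_trunc_im.
Qed.

Lemma is_fourier_integral_eq (R : realType) d (gr gi Fr Fi Fr' Fi' psi : Rpow R d -> R) :
  L2 gr gi -> is_fourier gr gi Fr Fi -> is_fourier gr gi Fr' Fi' ->
  measurable_fun setT psi ->
  (\int[leb R d]_w ((Fr w ^+ 2 + Fi w ^+ 2) * psi w)%:E =
   \int[leb R d]_w ((Fr' w ^+ 2 + Fi' w ^+ 2) * psi w)%:E)%E.
Proof.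
move=> hg hF hF' mpsi; have [mFr [mFi _]] := hF; have [mFr' [mFi' _]] := hF'.
apply: ae_eq_integral => //.
- by apply/measurable_EFinP/measurable_funM => //; exact: measurable_sqr_add.
- by apply/measurable_EFinP/measurable_funM => //; exact: measurable_sqr_add.
by apply: filterS (is_fourier_ae_eq hg hF hF') => w [-> ->].
Qed.

Section sobolev_moments.
Variables (R : realType) (d : nat) (gr gi : Rpow R d -> R) (m0 : R).
Hypotheses (hg : L2 gr gi) (hm0 : smoothness gr gi = m0%:E).

Lemma measurable_bracket_pow k :
  measurable_fun setT (fun w : Rpow R d => (1 + sqnorm2 w) `^ k).
Proof.
apply: measurableT_comp (measurable_powR k) _.
exact: measurable_funD (measurable_cst _) (@measurable_sqnorm2 R d).
Qed.

Lemma smoothness_gt r : r < m0 -> exists2 k, r < k & inH gr gi k.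
Proof.
move=> rm0; have : (r%:E < smoothness gr gi)%E by rewrite hm0 lte_fin.
by move/ereal_sup_gt => [_ [k [_ hk] <-]]; rewrite lte_fin; exists k.
Qed.

Lemma sobolev_moment_lt_smoothness Fr Fi k : is_fourier gr gi Fr Fi -> k < m0 ->
  (\int[leb R d]_w (((Fr w ^+ 2 + Fi w ^+ 2) * (1 + sqnorm2 w) `^ k)%:E) < +oo)%E.
Proof.
move=> hF /smoothness_gt[k' kk' [_ [Fr' [Fi' [hF' k'_fin]]]]].
have [mFr' [mFi' _]] := hF'.
apply: le_lt_trans k'_fin.
rewrite (is_fourier_integral_eq hg hF hF' (measurable_bracket_pow k)).
apply: ge0_le_integral => //.
- by move=> w _; rewrite lee_fin mulr_ge0 ?addr_ge0 ?sqr_ge0 ?powR_ge0.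
- by apply/measurable_EFinP/measurable_funM;
    [exact: measurable_sqr_add|exact: measurable_bracket_pow].
- by apply/measurable_EFinP/measurable_funM;
    [exact: measurable_sqr_add|exact: measurable_bracket_pow].
move=> w _; rewrite lee_fin ler_wpM2l ?addr_ge0 ?sqr_ge0 //.
by apply: ler_powR; [rewrite lerDl dotn_ge0|exact: ltW].
Qed.

Lemma sobolev_moment_smoothness Fr Fi : ~ inH gr gi m0 ->
  is_fourier gr gi Fr Fi ->
  (\int[leb R d]_w (((Fr w ^+ 2 + Fi w ^+ 2) * (1 + sqnorm2 w) `^ m0)%:E) = +oo)%E.
Proof.
move=> hnot hF; apply/eqP; rewrite eq_le leey /= leNgt; apply/negP => fin.
by apply: hnot; split => //; exists Fr, Fi.
Qed.

End sobolev_moments.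

Lemma eseries_half_pow (R : realType) :
  (\sum_(j <oo) (1 / (2 ^ (j + 1))%:R : R)%:E = 1)%E.
Proof.
have := @cvg_geometric_eseries_half R 1 0.
by rewrite expr0 divr1; exact: cvg_lim.
Qed.

Section exponent_sequence.
Variable R : realType.

Definition eps (j : nat) : R := (j.+1%:R)^-1.

Lemma eps_gt0 j : 0 < eps j.
Proof. by rewrite invr_gt0 ltr0n. Qed.

Lemma eps_le1 j : eps j <= 1.
Proof. by rewrite invf_le1 // ler1n. Qed.

Lemma eps_lt e : 0 < e -> exists j, eps j < e.
Proof.
move=> e0; exists (Num.truncn e^-1).
by rewrite /eps -[X in _ < X]invrK ltf_pV2 ?posrE ?invr_gt0 // truncnS_gt.
Qed.

Definition max1 (u : R) : R := Num.max u 1.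

Lemma max1_ge1 u : 1 <= max1 u.
Proof. by rewrite le_max lexx orbT. Qed.

Lemma max1_gt0 u : 0 < max1 u.
Proof. exact: lt_le_trans ltr01 (max1_ge1 u). Qed.

Lemma max1_id u : 1 <= u -> max1 u = u.
Proof. exact: max_l. Qed.

Lemma max1_le u v : u <= v -> max1 u <= max1 v.
Proof. by move=> uv; rewrite ge_max !le_max uv lexx orbT. Qed.

End exponent_sequence.

Lemma ln_ratio_cvg0 (R : realType) (h : R -> R) :
  (forall s, 1 < s -> 0 <= h s) ->
  (forall e, 0 < e -> exists K, forall s, 1 < s -> h s <= K + e * ln s) ->
  h s / ln s @[s --> +oo] --> 0.
Proof.
move=> h_ge0 h_le; apply/cvgrPdist_lt => e e0.
have [K hK] : exists K, forall s, 1 < s -> h s <= K + e / 2 * ln s.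
  by apply: h_le; rewrite divr_gt0.
have a0 : 0 < 2 * `|K| / e + 1 by rewrite ltr_wpDl // divr_ge0 ?mulr_ge0 // ltW.
exists (expR (2 * `|K| / e + 1)); split; first exact: num_real.
move=> s Ms; have s1 : 1 < s by apply: lt_trans Ms; rewrite expR_gt1.
have ln_gt : 2 * `|K| / e < ln s.
  apply: lt_trans (_ : _ < 2 * `|K| / e + 1) _; first by rewrite ltrDl.
  by rewrite -ltr_expR lnK ?posrE ?(lt_trans ltr01).
have ln_s0 : 0 < ln s by rewrite ln_gt0.
rewrite ltr_pdivrMr // in ln_gt.
rewrite sub0r normrN ger0_norm ?divr_ge0 ?h_ge0 ?ltW // ltr_pdivrMr //.
have := hK s s1; have := ler_norm K; lra.
Qed.

Section slow_weight.
Variables (R : realType) (c : nat -> R).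

Definition weight_term j (u : R) : R := c j / max1 u `^ eps R j.
Definition weight_series u : \bar R := (\sum_(j <oo) (weight_term j u)%:E)%E.
(* [weight_den] increases from 1 to 2 on [1, +oo): dividing by it makes [weight]
   strictly decreasing while keeping [weight_term j u / 2 <= weight u]. *)
Definition weight_den u : R := 2 - (max1 u)^-1.
Definition weight u : R := fine (weight_series u) / weight_den u.
Definition slowQ (s : R) : R := (weight (1 + s ^+ 2))^-1.

Hypotheses (c_gt0 : forall j, 0 < c j)
  (c_le : forall j, c j <= 1 / (2 ^ (j + 1))%:R).

Let pow_max1_ge1 j u : 1 <= max1 u `^ eps R j.
Proof.
by rewrite -(powRr0 (max1 u)) ler_powR ?max1_ge1 ?(ltW (eps_gt0 _ j)).
Qed.

Lemma weight_term_gt0 j u : 0 < weight_term j u.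
Proof. by rewrite divr_gt0 // powR_gt0 // max1_gt0. Qed.

Lemma weight_term_le j u : weight_term j u <= 1 / (2 ^ (j + 1))%:R.
Proof.
apply: le_trans (c_le j).
by rewrite ler_pdivrMr ?(lt_le_trans ltr01) // ler_peMr ?(ltW (c_gt0 j)).
Qed.

Lemma weight_term_le_mono j u v : u <= v -> weight_term j v <= weight_term j u.
Proof.
move=> uv; rewrite ler_pM2l // lef_pV2 ?posrE ?powR_gt0 ?max1_gt0 //.
by rewrite ge0_ler_powR ?nnegrE ?(ltW (eps_gt0 _ _)) ?(ltW (max1_gt0 _)) ?max1_le.
Qed.

Let term_ge0 u j : (0 <= (weight_term j u)%:E)%E.
Proof. by rewrite lee_fin ltW // weight_term_gt0. Qed.

Lemma weight_series_fin u : weight_series u \is a fin_num.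
Proof.
rewrite ge0_fin_numE; last by apply: nneseries_ge0 => j _ _; exact: term_ge0.
apply: (@le_lt_trans _ _ 1%E); last exact: ltry.
rewrite -(eseries_half_pow R); apply: lee_nneseries => [j _ _|j _].
  exact: term_ge0.
by rewrite lee_fin weight_term_le.
Qed.

Lemma weight_term_le_series j u : weight_term j u <= fine (weight_series u).
Proof.
rewrite -lee_fin fineK ?weight_series_fin //.
apply: le_trans (nneseries_lim_ge j.+1 (fun j _ _ => term_ge0 u j)).
by rewrite big_nat_recr //= leeDr // sume_ge0.
Qed.

Lemma weight_series_le1 u : fine (weight_series u) <= 1.
Proof.
rewrite -lee_fin fineK ?weight_series_fin // -(eseries_half_pow R).
apply: lee_nneseries => [j _ _|j _]; first exact: term_ge0.
by rewrite lee_fin weight_term_le.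
Qed.

Lemma weight_series_le_mono u v :
  u <= v -> fine (weight_series v) <= fine (weight_series u).
Proof.
move=> uv; rewrite -lee_fin !fineK ?weight_series_fin //.
apply: lee_nneseries => [j _ _|j _]; first exact: term_ge0.
by rewrite lee_fin weight_term_le_mono.
Qed.

Let weight_den_ge1 u : 1 <= weight_den u.
Proof.
rewrite /weight_den lerBrDl -lerBrDr (_ : 2 - 1 = 1 :> R); last by lra.
by rewrite invf_le1 ?max1_gt0 ?max1_ge1.
Qed.

Let weight_den_gt0 u : 0 < weight_den u.
Proof. exact: lt_le_trans ltr01 (weight_den_ge1 u). Qed.

Let weight_den_le2 u : weight_den u <= 2.
Proof. by rewrite /weight_den lerBlDr lerDl invr_ge0 ltW // max1_gt0. Qed.

Let weight_den_le_mono u v : u <= v -> weight_den u <= weight_den v.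
Proof.
by move=> uv; rewrite lerD2l lerN2 lef_pV2 ?posrE ?max1_gt0 ?max1_le.
Qed.

Let weight_den_lt u v : 1 <= u -> u < v -> weight_den u < weight_den v.
Proof.
move=> u1 uv; have v1 := le_trans u1 (ltW uv).
by rewrite /weight_den ltrD2l ltrN2 !max1_id // ltf_pV2 ?posrE ?(lt_le_trans ltr01).
Qed.

Let weight_series_gt0 u : 0 < fine (weight_series u).
Proof. exact: lt_le_trans (weight_term_gt0 0 u) (weight_term_le_series 0 u). Qed.

Lemma weight_gt0 u : 0 < weight u.
Proof. by rewrite divr_gt0 ?weight_series_gt0 ?weight_den_gt0. Qed.

Lemma weight_le_series u : weight u <= fine (weight_series u).
Proof.
rewrite ler_pdivrMr ?weight_den_gt0 // ler_peMr ?weight_den_ge1 //.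
exact/ltW/weight_series_gt0.
Qed.

Lemma weight_le1 u : weight u <= 1.
Proof. exact: le_trans (weight_le_series u) (weight_series_le1 u). Qed.

Lemma weight_ge_term j u : weight_term j u / 2 <= weight u.
Proof.
rewrite ler_pM ?(ltW (weight_term_gt0 j u)) ?invr_ge0 ?weight_term_le_series //.
by rewrite lef_pV2 ?posrE ?weight_den_gt0 ?weight_den_le2.
Qed.

Lemma weight_le_mono : {homo weight : u v /~ v <= u}.
Proof.
move=> u v uv.
rewrite ler_pM ?(ltW (weight_series_gt0 _)) ?invr_ge0 ?(ltW (weight_den_gt0 _)) //.
  exact: weight_series_le_mono.
by rewrite lef_pV2 ?posrE ?weight_den_gt0 ?weight_den_le_mono.
Qed.

Lemma weight_lt u v : 1 <= u -> u < v -> weight v < weight u.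
Proof.
move=> u1 uv; apply: (@le_lt_trans _ _ (fine (weight_series u) / weight_den v)).
  by rewrite ler_pM2r ?invr_gt0 // weight_series_le_mono // ltW.
by rewrite ltr_pM2l // ltf_pV2 ?posrE ?weight_den_lt.
Qed.

Lemma weight_pow_le_series m u : 1 <= u ->
  ((weight u * u `^ m)%:E <= \sum_(j <oo) (c j * u `^ (m - eps R j))%:E)%E.
Proof.
move=> u1; have u0 : u != 0 by rewrite gt_eqF // (lt_le_trans ltr01).
apply: (@le_trans _ _ ((u `^ m)%:E * weight_series u)%E).
  rewrite -(fineK (weight_series_fin u)) -EFinM lee_fin mulrC.
  by rewrite ler_wpM2l ?powR_ge0 ?weight_le_series.
rewrite -nneseriesZl; last by move=> j _; rewrite lee_fin ltW ?weight_term_gt0.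
apply: lee_nneseries => [j _ _|j _].
  by rewrite -EFinM lee_fin mulr_ge0 ?powR_ge0 ?ltW ?weight_term_gt0.
by rewrite -EFinM lee_fin /weight_term max1_id // powRB ?u0 ?implybT // mulrCA.
Qed.

Lemma weight_pow_ge j k u : 1 <= u ->
  c j / 2 * u `^ (k - eps R j) <= weight u * u `^ k.
Proof.
move=> u1; have u0 : u != 0 by rewrite gt_eqF // (lt_le_trans ltr01).
have -> : c j / 2 * u `^ (k - eps R j) = weight_term j u / 2 * u `^ k.
  rewrite /weight_term max1_id // powRB ?u0 ?implybT //.
  by field; rewrite gt_eqF // powR_gt0 // (lt_le_trans ltr01).
by rewrite ler_wpM2r ?powR_ge0 ?weight_ge_term.
Qed.

Lemma measurable_weight : measurable_fun setT weight.
Proof. exact: nonincreasing_measurable weight_le_mono. Qed.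

Lemma slowQ_gt0 s : 0 < slowQ s.
Proof. by rewrite invr_gt0 weight_gt0. Qed.

Lemma slowQ_ge1 s : 1 <= slowQ s.
Proof. by rewrite invf_ge1 ?weight_gt0 ?weight_le1. Qed.

Lemma slowQ_lt s t : 0 <= s -> s < t -> slowQ s < slowQ t.
Proof.
move=> s0 st; rewrite ltf_pV2 ?posrE ?weight_gt0 //.
by apply: weight_lt; [rewrite lerDl sqr_ge0 | rewrite ltrD2l; nra].
Qed.

Lemma slowQ_le j s : slowQ s <= 2 * (1 + s ^+ 2) `^ eps R j / c j.
Proof.
have u1 : 1 <= 1 + s ^+ 2 by rewrite lerDl sqr_ge0.
have pos : 0 < (1 + s ^+ 2) `^ eps R j by rewrite powR_gt0 // (lt_le_trans ltr01).
rewrite -[X in _ <= X]invrK lef_pV2 ?posrE ?weight_gt0 ?invr_gt0 ?divr_gt0 ?mulr_gt0 //.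
rewrite (_ : _^-1 = weight_term j (1 + s ^+ 2) / 2) ?weight_ge_term //.
by rewrite /weight_term max1_id //; field; rewrite !gt_eqF.
Qed.

Lemma ln_slowQ_le j s : 1 <= s ->
  ln (slowQ s) <= 2 * ln 2 - ln (c j) + 2 * eps R j * ln s.
Proof.
move=> s1; have s0 : 0 < s by exact: lt_le_trans ltr01 s1.
have u0 : 0 < 1 + s ^+ 2 by rewrite ltr_pwDl ?sqr_ge0.
have Qle := slowQ_le j s.
rewrite -ler_ln ?posrE ?slowQ_gt0 ?divr_gt0 ?mulr_gt0 ?powR_gt0 // in Qle.
apply: le_trans Qle _.
rewrite ln_div ?posrE ?mulr_gt0 ?powR_gt0 // lnM ?posrE ?powR_gt0 // ln_powR.
have ln_u : ln (1 + s ^+ 2) <= ln 2 + 2 * ln s.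
  rewrite mulr_natl -lnXn // -lnM ?posrE ?exprn_gt0 // ler_ln ?posrE ?mulr_gt0 ?exprn_gt0 //.
  have := exprn_ege1 2 s1.
  lra.
have ln2_ge0 : 0 <= ln (2 : R) by rewrite ln_ge0 // ler1n.
have e_ln_u : eps R j * ln (1 + s ^+ 2) <= eps R j * ln 2 + 2 * eps R j * ln s.
  by rewrite -mulrA -mulrCA -mulrDr ler_pM2l ?eps_gt0.
have e_ln2 : eps R j * ln 2 <= ln 2 by rewrite ler_piMl ?eps_le1.
lra.
Qed.

Lemma slowQ_ln_ratio : ln (slowQ s) / ln s @[s --> +oo] --> 0.
Proof.
apply: ln_ratio_cvg0 => [s _|e e0]; first by rewrite ln_ge0 ?slowQ_ge1.
have [j ej] : exists j, eps R j < e / 2 by apply: eps_lt; rewrite divr_gt0.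
exists (2 * ln 2 - ln (c j)) => s s1.
apply: le_trans (ln_slowQ_le j (ltW s1)) _.
rewrite lerD2l ler_wpM2r ?ln_ge0 ?(ltW s1) //; lra.
Qed.

End slow_weight.

Lemma exists_small_coefs (R : realType) (I : nat -> \bar R) :
  (forall j, 0 <= I j)%E -> (forall j, I j < +oo)%E ->
  exists c : nat -> R, [/\ forall j, 0 < c j,
    forall j, c j <= 1 / (2 ^ (j + 1))%:R &
    forall j, ((c j)%:E * I j <= (1 / (2 ^ (j + 1))%:R)%:E)%E].
Proof.
move=> I_ge0 I_fin.
have IE j : (fine (I j))%:E = I j by rewrite fineK // ge0_fin_numE.
have fI_ge0 j : 0 <= fine (I j) by rewrite fine_ge0.
exists (fun j => 1 / (2 ^ (j + 1))%:R / (fine (I j) + 1)); split => j.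
- by rewrite divr_gt0 ?ltr_wpDl.
- by rewrite ler_pdivrMr ?ltr_wpDl // ler_peMr ?lerDr ?divr_ge0.
- rewrite -IE -EFinM lee_fin fineK ?ge0_fin_numE // !mul1r -mulrA.
  rewrite -[leRHS]mulr1 ler_pM2l ?invr_gt0 ?ltr0n ?expn_gt0 //.
  by rewrite mulrC ler_pdivrMr ?ltr_wpDl // mul1r lerDl.
Qed.

Section weighted_moments.
Context d0 (T : measurableType d0) (R : realType).
Variable mu : {measure set T -> \bar R}.
Variables (P phi : T -> R) (c : nat -> R).
Hypotheses (mP : measurable_fun setT P) (mphi : measurable_fun setT phi).
Hypotheses (P_ge0 : forall x, 0 <= P x) (phi_ge1 : forall x, 1 <= phi x).
Hypotheses (c_gt0 : forall j, 0 < c j)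
  (c_le : forall j, c j <= 1 / (2 ^ (j + 1))%:R).

Let mpow k : measurable_fun setT (fun x => phi x `^ k).
Proof. exact: measurableT_comp (measurable_powR k) mphi. Qed.

Let mPpow k : measurable_fun setT (fun x => (P x * phi x `^ k)%:E).
Proof. exact/measurable_EFinP/measurable_funM. Qed.

Let Ppow_ge0 k x : (0 <= (P x * phi x `^ k)%:E)%E.
Proof. by rewrite lee_fin mulr_ge0 ?powR_ge0. Qed.

Let mweight_term : measurable_fun setT (fun x => weight c (phi x)).
Proof. exact: measurableT_comp (measurable_weight c_gt0 c_le) mphi. Qed.

Lemma weighted_moment_le1 m :
  (forall j, (c j)%:E * \int[mu]_x (P x * phi x `^ (m - eps R j))%:E <=
             (1 / (2 ^ (j + 1))%:R)%:E)%E ->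
  (\int[mu]_x (P x * weight c (phi x) * phi x `^ m)%:E <= 1)%E.
Proof.
move=> moment_le.
pose g j x := ((c j)%:E * (P x * phi x `^ (m - eps R j))%:E)%E.
have g_ge0 j x : (0 <= g j x)%E.
  by rewrite /g -EFinM lee_fin !mulr_ge0 ?powR_ge0 ?P_ge0 ?(ltW (c_gt0 j)).
have mg j : measurable_fun setT (g j) by exact: emeasurable_funM.
apply: (@le_trans _ _ (\int[mu]_x \sum_(j <oo) g j x)%E).
  apply: ge0_le_integral => //.
  - move=> x _; rewrite lee_fin mulr_ge0 ?powR_ge0 // mulr_ge0 ?P_ge0 //.
    exact/ltW/weight_gt0.
  - by apply/measurable_EFinP/measurable_funM => //; exact: measurable_funM.
  - exact: (ge0_emeasurable_sum (fun k x _ _ => g_ge0 k x) (fun k _ => mg k)).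
  move=> x _; rewrite -mulrA EFinM.
  apply: le_trans (lee_wpmul2l _ (weight_pow_le_series c_gt0 c_le m (phi_ge1 x))) _.
    by rewrite lee_fin.
  rewrite -nneseriesZl; last first.
    by move=> j _; rewrite lee_fin mulr_ge0 ?powR_ge0 ?(ltW (c_gt0 j)).
  apply: lee_nneseries => [j _ _|j _].
    by rewrite -EFinM lee_fin !mulr_ge0 ?powR_ge0 ?(ltW (c_gt0 j)).
  by rewrite /g -!EFinM lee_fin mulrCA.
rewrite integral_nneseries // -(eseries_half_pow R).
apply: lee_nneseries => [j _ _|j _]; first exact: integral_ge0.
by rewrite /g ge0_integralZl_EFin ?(ltW (c_gt0 j)).
Qed.

Lemma weighted_moment_infty m delta : 0 < delta ->
  (\int[mu]_x (P x * phi x `^ m)%:E = +oo ->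
   \int[mu]_x (P x * weight c (phi x) * phi x `^ (m + delta))%:E = +oo)%E.
Proof.
move=> delta_gt0 moment_oo.
have [j /ltW ej] := eps_lt delta_gt0.
have cj2 : 0 < c j / 2 by rewrite divr_gt0.
apply/eqP; rewrite -leye_eq.
have -> : +oo%E = ((c j / 2)%:E * \int[mu]_x (P x * phi x `^ m)%:E)%E.
  by rewrite moment_oo gt0_muley ?lte_fin.
rewrite -ge0_integralZl_EFin ?(ltW cj2) //.
apply: ge0_le_integral => //.
- by move=> x _; rewrite -EFinM lee_fin mulr_ge0 ?(ltW cj2) // mulr_ge0 ?powR_ge0.
- exact: emeasurable_funM.
- by apply/measurable_EFinP/measurable_funM => //; exact: measurable_funM.
move=> x _; rewrite -EFinM lee_fin -mulrA mulrCA ler_wpM2l //.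
apply: le_trans (weight_pow_ge c_gt0 c_le j (m + delta) (phi_ge1 x)).
by rewrite ler_wpM2l ?(ltW cj2) // ler_powR // -addrA lerDl subr_ge0.
Qed.

End weighted_moments.

Theorem lemma1 (R : realType) (d : nat) (gr gi : Rpow R d -> R) (m0 : R)
  (hd : (0 < d)%N)
  (hg : L2 gr gi)
  (hm0 : smoothness gr gi = m0%:E)
  (hm0d : d%:R / 2 < m0)
  (hnot : ~ inH gr gi m0) :
  exists Q : R -> R,
    (forall s, 0 <= s -> 0 < Q s) /\
    (forall s t, 0 <= s -> s < t -> Q s < Q t) /\
    (fun s => ln (Q s) / ln s) x @[x --> +oo] --> 0 /\
    (forall Fr Fi : Rpow R d -> R, is_fourier gr gi Fr Fi ->
      (\int[leb R d]_w
         (((Fr w ^+ 2 + Fi w ^+ 2) / Q (norm2 w) * (1 + sqnorm2 w) `^ m0)%:E)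
         <= 1)%E /\
      (forall delta : R, 0 < delta ->
        (\int[leb R d]_w
          (((Fr w ^+ 2 + Fi w ^+ 2) / Q (norm2 w)
             * (1 + sqnorm2 w) `^ (m0 + delta))%:E) = +oo)%E)).
Proof.
have phi_ge1 (w : Rpow R d) : 1 <= 1 + sqnorm2 w by rewrite lerDl dotn_ge0.
have mphi : measurable_fun setT (fun w : Rpow R d => 1 + sqnorm2 w).
  exact: measurable_funD (measurable_cst _) (@measurable_sqnorm2 R d).
have [_ _ [_ [Fr0 [Fi0 [hF0 _]]]]] : exists2 k, m0 - 1 < k & inH gr gi k.
  by apply: (smoothness_gt hm0); rewrite ltrBlDr ltrDl.
pose I j := (\int[leb R d]_w
  ((Fr0 w ^+ 2 + Fi0 w ^+ 2) * (1 + sqnorm2 w) `^ (m0 - eps R j))%:E)%E.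
have I_ge0 j : (0 <= I j)%E.
  by apply: integral_ge0 => w _; rewrite lee_fin mulr_ge0 ?addr_ge0 ?sqr_ge0 ?powR_ge0.
have I_fin j : (I j < +oo)%E.
  by apply: (sobolev_moment_lt_smoothness hg hm0 hF0); rewrite ltrBlDr ltrDl eps_gt0.
have [c [c_gt0 c_le cI_le]] := exists_small_coefs I_ge0 I_fin.
exists (slowQ c); split; [|split; [|split]].
- by move=> s _; exact: slowQ_gt0.
- by move=> s t s0 st; exact: slowQ_lt.
- exact: slowQ_ln_ratio.
move=> Fr Fi hF; have [mFr [mFi _]] := hF.
have integrandE k : (\int[leb R d]_w (((Fr w ^+ 2 + Fi w ^+ 2) / slowQ c (norm2 w)
      * (1 + sqnorm2 w) `^ k)%:E) = \int[leb R d]_w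
    ((Fr w ^+ 2 + Fi w ^+ 2) * weight c (1 + sqnorm2 w) * (1 + sqnorm2 w) `^ k)%:E)%E.
  by apply: eq_integral => w _; rewrite /slowQ invrK norm2_sqr.
rewrite integrandE; split.
- apply: (weighted_moment_le1 (P := fun w => Fr w ^+ 2 + Fi w ^+ 2)
    (phi := fun w => 1 + sqnorm2 w)) => //.
  + exact: measurable_sqr_add.
  + by move=> w; rewrite addr_ge0 ?sqr_ge0.
  + move=> j; rewrite (is_fourier_integral_eq hg hF hF0) //.
    exact: measurable_bracket_pow.
- move=> delta delta_gt0; rewrite integrandE.
  apply: (weighted_moment_infty (P := fun w => Fr w ^+ 2 + Fi w ^+ 2)
    (phi := fun w => 1 + sqnorm2 w)) => //.
  + exact: measurable_sqr_add.
  + by move=> w; rewrite addr_ge0 ?sqr_ge0.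
  + exact: sobolev_moment_smoothness hnot hF.
Qed.
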